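(* Let $X=\{1,\dots,n\}$, $Y$ finite, $Q$ a symmetric irreducible stochastic matrix on $Y$ (notation in context). Let $2\le k\le n-1$, let $\underline a=(a_0,\dots,a_m)$ be a type with $a_0+\cdots+a_m=k+1$ and $a_0\ge1$, $\underline a'=(a_0-1,a_1,\dots,a_m)$, $A\subseteq X$ with $|A|=k$, and $F\in P_{k,\underline a',A}$. Then $$D_{k+1,\underline a}D^*_{k+1,\underline a}F-D^*_{k,\underline a'}D_{k,\underline a'}F=|Y|\,(n+\ell(\underline a)-2k)\,F.$$
   Context: $Q$ acts on $L(Y)$ by $(Qf)(y)=\sum_{y'}q(y,y')f(y')$, with distinct eigenvalues $\lambda_0=1,\dots,\lambda_m$ and eigenspaces $W_0$ (constants), $W_1,\dots,W_m$. $\Theta_k$: functions $\theta$ with $\mathrm{dom}(\theta)$ a $k$-subset of $X$ and values in $Y$; $\varphi\subseteq\theta$ means $\mathrm{dom}\varphi\subseteq\mathrm{dom}\theta$ and $\theta|_{\mathrm{dom}\varphi}=\varphi$. $D_k:L(\Theta_k)\to L(\Theta_{k-1})$, $(D_kF)(\varphi)=\sum_{\theta\supseteq\varphi}F(\theta)$; $D_k^*:L(\Theta_{k-1})\to L(\Theta_k)$, $(D_k^*F)(\theta)=\sum_{\varphi\subseteq\theta}F(\varphi)$. Types $\underline b=(b_0,\dots,b_m)$ of nonnegative integers, $\ell(\underline b)=b_1+\cdots+b_m$, $\underline b'=(b_0-1,b_1,\dots,b_m)$. A fundamental function of type $\underline b$ on a $k$-set $A$ is $F=\bigotimes_{j\in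 A}F^j$ ($F(\theta)=\prod_{j\in A}F^j(\theta(j))$ on $Y^A$, $0$ elsewhere) with each $F^j$ in some $W_{i_j}$ and exactly $b_i$ indices with $i_j=i$; $P_{k,\underline b,A}$ is their span, $P_{k,\underline b}=\bigoplus_AP_{k,\underline b,A}$ ($\{0\}$ if an entry is negative). $D_{k,\underline b}$ is $D_k$ restricted to $P_{k,\underline b}$ and $D^*_{k,\underline b}$ is $D^*_k$ restricted to $P_{k-1,\underline b'}$. *)

From HB Require Import structures.
From mathcomp Require Import all_boot all_order all_algebra.
From mathcomp Require Import reals.
Set Implicit Arguments. Unset Strict Implicit. Unset Printing Implicit Defensive.
Import Order.TTheory GRing.Theory Num.Theory.
Local Open Scope ring_scope.

(* A partial function theta : X -> Y with finite domain is encoded as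
   theta : {ffun 'I_n -> option Y}; Theta_k = those with #|pdom theta| = k.
   A function in L(Theta_k) is encoded as a function on all partial
   functions (it is only ever evaluated / nonzero on Theta_k). *)

Section Defs.
Variables (R : realType) (n : nat) (Y : finType).

Definition pfun := {ffun 'I_n -> option Y}.

Definition pdom (th : pfun) : {set 'I_n} := [set j | th j != None].

Definition psub (phi th : pfun) : bool :=
  [forall j, (phi j != None) ==> (phi j == th j)].

Definition Dop (k : nat) (F : pfun -> R) : pfun -> R :=
  fun phi => if #|pdom phi|.+1 == k then
               \sum_(th : pfun | (#|pdom th| == k) && psub phi th) F th
             else 0.

Definition Dstar (k : nat) (F : pfun -> R) : pfun -> R :=
  fun th => if #|pdom th| == k then
              \sum_(phi : pfun | (#|pdom phi|.+1 == k) && psub phi th) F phi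
            else 0.

Definition Qact (q : Y -> Y -> R) (f : Y -> R) : Y -> R :=
  fun y => \sum_(y' : Y) q y y' * f y'.

Fixpoint qpow (q : Y -> Y -> R) (t : nat) : Y -> Y -> R :=
  match t with
  | 0 => fun y y' => if y == y' then 1 else 0
  | t'.+1 => fun y y' => \sum_(z : Y) qpow q t' y z * q z y'
  end.

Definition symmetric_stochastic_irreducible (q : Y -> Y -> R) : Prop :=
  [/\ (forall y y', 0 <= q y y'),
      (forall y, \sum_(y' : Y) q y y' = 1),
      (forall y y', q y y' = q y' y) &
      (forall y y', exists t, 0 < qpow q t y y')].

Definition eigen_enum (q : Y -> Y -> R) (m : nat) (lam : 'I_m.+1 -> R) : Prop :=
  [/\ injective lam,
      lam ord0 = 1,
      (forall i, exists f : Y -> R, (exists y, f y != 0) /\ Qact q f = (fun y => lam i * f y)) &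
      (forall (mu : R) (f : Y -> R), (exists y, f y != 0) ->
          Qact q f = (fun y => mu * f y) -> exists i, mu = lam i)].

Definition inW (q : Y -> Y -> R) (m : nat) (lam : 'I_m.+1 -> R) (i : 'I_m.+1)
  (f : Y -> R) : Prop := Qact q f = (fun y => lam i * f y).

Definition fundamental (q : Y -> Y -> R) (m : nat) (lam : 'I_m.+1 -> R)
  (b : 'I_m.+1 -> nat) (A : {set 'I_n}) (F : pfun -> R) : Prop :=
  exists (idx : 'I_n -> 'I_m.+1) (fam : 'I_n -> Y -> R),
    [/\ (forall j, j \in A -> inW q lam (idx j) (fam j)),
        (forall i, #|[set j in A | idx j == i]| = b i) &
        (forall th : pfun, F th =
           if pdom th == A then
             \prod_(j in A) (match th j with Some y => fam j y | None => 0 end)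
           else 0)].

(* P_{k,b,A}: the linear span of fundamental functions of type b on A
   (k = #|A| is implicit in A) *)
Definition inP (q : Y -> Y -> R) (m : nat) (lam : 'I_m.+1 -> R)
  (b : 'I_m.+1 -> nat) (A : {set 'I_n}) (F : pfun -> R) : Prop :=
  exists (N : nat) (fs : 'I_N -> pfun -> R) (c : 'I_N -> R),
    (forall l, fundamental q lam b A (fs l)) /\
    (forall th, F th = \sum_(l < N) c l * fs l th).

End Defs.

Definition ell (m : nat) (b : 'I_m.+1 -> nat) : nat :=
  \sum_(i < m.+1 | i != ord0) b i.

Definition tprime (m : nat) (b : 'I_m.+1 -> nat) : 'I_m.+1 -> nat :=
  fun i => if i == ord0 then (b i).-1 else b i.

From HB Require Import structures.
From mathcomp Require Import all_boot all_order all_algebra.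
From mathcomp Require Import reals ring.
Import Order.TTheory GRing.Theory Num.Theory.
Local Open Scope ring_scope.
Set Implicit Arguments. Unset Strict Implicit. Unset Printing Implicit Defensive.

(* For any [G] and any [phi] with [k] points in its domain, expanding both
   composites shows that the terms which move one point out of the domain of
   [phi] and a new point in occur in both and cancel, leaving
     D_{k+1} D*_{k+1} G - D*_k D_k G = (n - k) |Y| G(phi) - resample G phi,
   where [resample G phi] sums [G] over all ways of resetting one value of
   [phi].  For a product of eigenfunctions on [A], resetting the coordinate
   [x] integrates the factor [F^x]: this gives [|Y|] times its value when
   [F^x] is constant and [0] otherwise, because harmonic functions of an
   irreducible chain are constant and a symmetric stochastic matrix preserves
   sums.  So [resample F = (a_0 - 1) |Y| F], and [ell a = k + 1 - a_0]. *)

Section PartialFunctions.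
Variables (n : nat) (Y : finType).
Implicit Types (phi th : pfun n Y) (x : 'I_n).

Definition pfun_set phi x (v : option Y) : pfun n Y :=
  [ffun j => if j == x then v else phi j].

Lemma pfun_setE phi x v j : pfun_set phi x v j = if j == x then v else phi j.
Proof. by rewrite ffunE. Qed.

Lemma pdom_set_Some phi x y : pdom (pfun_set phi x (Some y)) = x |: pdom phi.
Proof. by apply/setP=> j; rewrite !inE pfun_setE; case: (j =P x). Qed.

Lemma pdom_set_Some_in phi x y :
  x \in pdom phi -> pdom (pfun_set phi x (Some y)) = pdom phi.
Proof. by move=> x_phi; rewrite pdom_set_Some; apply/setUidPr; rewrite sub1set. Qed.

Lemma pdom_set_None phi x : pdom (pfun_set phi x None) = pdom phi :\ x.
Proof. by apply/setP=> j; rewrite !inE pfun_setE; case: (j =P x). Qed.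

Lemma pfun_set_set phi x v w : pfun_set (pfun_set phi x v) x w = pfun_set phi x w.
Proof. by apply/ffunP=> j; rewrite !pfun_setE; case: eqP. Qed.

Lemma pfun_setC phi x x' v w : x != x' ->
  pfun_set (pfun_set phi x v) x' w = pfun_set (pfun_set phi x' w) x v.
Proof.
move=> neq_xx'; apply/ffunP=> j; rewrite !pfun_setE.
by case: (j =P x) => [->|//]; rewrite (negbTE neq_xx').
Qed.

Lemma pfun_set_id phi x : x \notin pdom phi -> pfun_set phi x None = phi.
Proof.
rewrite inE negbK => /eqP phix.
by apply/ffunP=> j; rewrite pfun_setE; case: (j =P x) => [->|].
Qed.

Lemma psubP phi th : reflect (forall j, phi j != None -> phi j = th j) (psub phi th).
Proof.
apply: (iffP forallP) => [sub j phij|sub j]; last by apply/implyP=> /sub ->.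
by apply/eqP; move: (sub j); rewrite phij.
Qed.

Lemma psub_pdom phi th : psub phi th -> pdom phi \subset pdom th.
Proof. by move/psubP=> sub; apply/subsetP=> j; rewrite !inE => /[dup] /sub ->. Qed.

Lemma psub_one_point phi th x :
  psub phi th -> pdom th :\: pdom phi = [set x] ->
  th = pfun_set phi x (th x).
Proof.
move=> /psubP sub dom_diff; apply/ffunP=> j; rewrite pfun_setE.
case: (j =P x) => [->//|/eqP neq_jx].
case phij: (phi j) => [z|]; first by rewrite -phij sub ?phij.
case thj: (th j) => [w|] //.
have : j \in pdom th :\: pdom phi by rewrite !inE phij thj.
by rewrite dom_diff inE (negbTE neq_jx).
Qed.

Lemma psub_succ_imset phi :
  [set th | (#|pdom th| == #|pdom phi|.+1) && psub phi th] =
  [set pfun_set phi p.1 (Some p.2) | p in [set p : 'I_n * Y | p.1 \notin pdom phi]].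
Proof.
apply/setP=> th; rewrite inE; apply/andP/imsetP => [[/eqP card_th sub]|].
  have sub_dom := psub_pdom sub.
  have /cards1P[x dom_diff] : #|pdom th :\: pdom phi| == 1%N.
    by rewrite cardsD (setIidPr sub_dom) card_th subSnn.
  have : x \in pdom th :\: pdom phi by rewrite dom_diff set11.
  rewrite !inE => /andP[x_phi]; case thx: (th x) => [y|] // _.
  by exists (x, y); rewrite ?inE // -thx; apply: psub_one_point.
case=> -[x y]; rewrite inE /= => x_phi ->.
rewrite pdom_set_Some cardsU1 x_phi eqxx; split=> //.
apply/psubP=> j phij; rewrite pfun_setE; case: (j =P x) => // ejx.
by move: x_phi; rewrite inE -ejx phij.
Qed.

Lemma psub_pred_imset th :
  [set phi | (#|pdom phi|.+1 == #|pdom th|) && psub phi th] =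
  [set pfun_set th x None | x in pdom th].
Proof.
apply/setP=> phi; rewrite inE; apply/andP/imsetP => [[/eqP card_phi sub]|].
  have sub_dom := psub_pdom sub.
  have /cards1P[x dom_diff] : #|pdom th :\: pdom phi| == 1%N.
    by rewrite cardsD (setIidPr sub_dom) -card_phi subSnn.
  have : x \in pdom th :\: pdom phi by rewrite dom_diff set11.
  rewrite inE => /andP[x_phi x_th]; exists x => //.
  apply/ffunP=> j; rewrite pfun_setE.
  case: (j =P x) => [->|/eqP neq_jx]; first by move: x_phi; rewrite inE negbK => /eqP.
  by rewrite [in RHS](psub_one_point sub dom_diff) pfun_setE (negbTE neq_jx).
case=> x x_th ->; rewrite pdom_set_None (cardsD1 x (pdom th)) x_th; split=> //.
by apply/psubP=> j; rewrite pfun_setE; case: (j =P x).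
Qed.

Section Sums.
Variable V : nmodType.
Implicit Type G : pfun n Y -> V.

Lemma sum_psub_succ phi G :
  \sum_(th | (#|pdom th| == #|pdom phi|.+1) && psub phi th) G th =
  \sum_(x in ~: pdom phi) \sum_(y : Y) G (pfun_set phi x (Some y)).
Proof.
rewrite -big_set psub_succ_imset big_imset /=.
  by rewrite pair_big_dep /=; apply: eq_bigl => -[x y]; rewrite !inE andbT.
move=> [x1 y1] [x2 y2]; rewrite ?inE /= => x1_phi _ /ffunP/(_ x1).
rewrite !pfun_setE eqxx; case: eqP => [<- [->] //|_ phix1].
by move: x1_phi; rewrite ?inE -phix1.
Qed.

Lemma sum_psub_pred th G :
  \sum_(phi | (#|pdom phi|.+1 == #|pdom th|) && psub phi th) G phi =
  \sum_(x in pdom th) G (pfun_set th x None).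
Proof.
rewrite -big_set psub_pred_imset big_imset // => x1 x2 x1_th _ /ffunP/(_ x1).
rewrite !pfun_setE eqxx; case: (x1 =P x2) => // _ thx1.
by move: x1_th; rewrite inE -thx1.
Qed.

End Sums.
End PartialFunctions.

Section Commutator.
Variables (R : realType) (n : nat) (Y : finType).
Implicit Types (G : pfun n Y -> R) (phi : pfun n Y).

Definition resample G phi : R :=
  \sum_(x in pdom phi) \sum_(y : Y) G (pfun_set phi x (Some y)).

Lemma Dop_Dstar G phi :
  Dop #|pdom phi|.+1 (Dstar #|pdom phi|.+1 G) phi =
  \sum_(x in ~: pdom phi) \sum_(y : Y)
     (G phi + \sum_(x' in pdom phi) G (pfun_set (pfun_set phi x' None) x (Some y))).
Proof.
rewrite /Dop eqxx sum_psub_succ; apply: eq_bigr => x; rewrite inE => x_phi.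
apply: eq_bigr => y _.
have card_set : #|pdom (pfun_set phi x (Some y))| = #|pdom phi|.+1.
  by rewrite pdom_set_Some cardsU1 x_phi.
rewrite /Dstar card_set eqxx -{1}card_set sum_psub_pred pdom_set_Some.
rewrite big_setU1 //= pfun_set_set pfun_set_id //; congr (_ + _).
apply: eq_bigr => x' x'_phi; rewrite pfun_setC //.
by apply: contraNneq x_phi => ->.
Qed.

Lemma Dstar_Dop G phi :
  Dstar #|pdom phi| (Dop #|pdom phi| G) phi =
  \sum_(x' in pdom phi) (\sum_(y : Y) G (pfun_set phi x' (Some y)) +
   \sum_(x in ~: pdom phi) \sum_(y : Y) G (pfun_set (pfun_set phi x' None) x (Some y))).
Proof.
rewrite /Dstar eqxx sum_psub_pred; apply: eq_bigr => x' x'_phi.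
have card_unset : #|pdom (pfun_set phi x' None)|.+1 = #|pdom phi|.
  by rewrite pdom_set_None (cardsD1 x' (pdom phi)) x'_phi.
rewrite /Dop card_unset eqxx -{1}card_unset sum_psub_succ.
have -> : ~: pdom (pfun_set phi x' None) = x' |: ~: pdom phi.
  by apply/setP=> j; rewrite pdom_set_None !inE negb_and negbK.
rewrite big_setU1 /=; last by rewrite inE x'_phi.
by congr (_ + _); apply: eq_bigr => y _; rewrite pfun_set_set.
Qed.

Lemma Dop_Dstar_commutator G phi :
  Dop #|pdom phi|.+1 (Dstar #|pdom phi|.+1 G) phi
  - Dstar #|pdom phi| (Dop #|pdom phi| G) phi =
  (n - #|pdom phi|)%:R * #|Y|%:R * G phi - resample G phi.
Proof.
rewrite Dop_Dstar Dstar_Dop /resample.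
under eq_bigr do rewrite big_split /=.
rewrite !big_split /=.
have -> : \sum_(x in ~: pdom phi) \sum_(y : Y) \sum_(x' in pdom phi)
            G (pfun_set (pfun_set phi x' None) x (Some y)) =
          \sum_(x' in pdom phi) \sum_(x in ~: pdom phi) \sum_(y : Y)
            G (pfun_set (pfun_set phi x' None) x (Some y)).
  by under eq_bigr do rewrite exchange_big /=; rewrite exchange_big.
rewrite opprD addrACA addrN addr0; congr (_ - _).
rewrite (eq_bigr (fun _ => G phi *+ #|Y|)); last by move=> *; rewrite sumr_const.
by rewrite sumr_const cardsCs setCK card_ord -mulrA !mulr_natl.
Qed.

End Commutator.

Section Eigenfunctions.
Variables (R : realType) (Y : finType) (q : Y -> Y -> R).
Hypotheses (q_ge0 : forall y y', 0 <= q y y')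
           (q_stochastic : forall y, \sum_(y' : Y) q y y' = 1).
Implicit Type f : Y -> R.

Section Harmonic.
Variables (f : Y -> R) (y0 : Y).
Hypotheses (f_harmonic : forall y, Qact q f y = f y)
           (f_max : forall y, f y <= f y0).

(* [f y0 - f] is nonnegative and averages to [0] under every row of [q]. *)
Lemma harmonic_max_step z y : f z = f y0 -> 0 < q z y -> f y = f y0.
Proof.
move=> fz qzy.
have sum0 : \sum_(w : Y) q z w * (f y0 - f w) = 0.
  under eq_bigr do rewrite mulrBr.
  by rewrite sumrB -mulr_suml q_stochastic mul1r -fz [X in _ - X]f_harmonic subrr.
have /eqP : q z y * (f y0 - f y) = 0.
  by apply: (psumr_eq0P _ sum0) => // w _; rewrite mulr_ge0 // subr_ge0.
by rewrite mulf_eq0 subr_eq0 (gt_eqF qzy) => /eqP.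
Qed.

Lemma harmonic_max_qpow t y : 0 < qpow q t y0 y -> f y = f y0.
Proof.
elim: t y => [|t IHt] y /=; first by case: (y0 =P y) => [<-|]; rewrite ?ltxx.
move=> qpow_pos.
have [z qzy|qpow_q0] := pickP (fun z => 0 < qpow q t y0 z * q z y).
  have qzy_pos : 0 < q z y.
    by rewrite lt_def q_ge0 andbT; apply: contraTneq qzy => ->; rewrite mulr0 ltxx.
  apply: (harmonic_max_step _ qzy_pos); apply: IHt.
  by rewrite -(pmulr_lgt0 _ qzy_pos).
have : \sum_(z : Y) qpow q t y0 z * q z y <= 0.
  by apply: sumr_le0 => z _; rewrite leNgt qpow_q0.
by rewrite leNgt qpow_pos.
Qed.

End Harmonic.

Lemma harmonic_const f :
  (forall y y', exists t, 0 < qpow q t y y') ->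
  (forall y, Qact q f y = f y) -> forall y1 y2, f y1 = f y2.
Proof.
move=> q_irreducible f_harmonic y1 y2.
have [y0 _ f_argmax] := @arg_maxP _ _ _ y1 xpredT f isT.
have f_max y : f y <= f y0 := f_argmax y isT.
have [t1 /(harmonic_max_qpow f_harmonic f_max) ->] := q_irreducible y0 y1.
by have [t2 /(harmonic_max_qpow f_harmonic f_max) ->] := q_irreducible y0 y2.
Qed.

(* A symmetric stochastic [q] preserves the sum of a function. *)
Lemma eigenfunction_sum_eq0 f (mu : R) :
  (forall y y', q y y' = q y' y) ->
  Qact q f = (fun y => mu * f y) -> mu != 1 -> \sum_(y : Y) f y = 0.
Proof.
move=> q_sym f_eigen mu_neq1.
have sumQ : \sum_(y : Y) Qact q f y = \sum_(y : Y) f y.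
  rewrite /Qact exchange_big /=; apply: eq_bigr => y' _.
  by rewrite -mulr_suml (eq_bigr _ (fun y _ => q_sym y y')) q_stochastic mul1r.
move/eqP: sumQ; rewrite f_eigen -mulr_sumr -subr_eq0 -{2}(mul1r (\sum_y f y)).
by rewrite -mulrBl mulf_eq0 subr_eq0 (negbTE mu_neq1) => /eqP.
Qed.

End Eigenfunctions.

Lemma sum_inW (R : realType) (Y : finType) (q : Y -> Y -> R) (m : nat)
    (lam : 'I_m.+1 -> R) (i : 'I_m.+1) (f : Y -> R) (y0 : Y) :
  symmetric_stochastic_irreducible q -> eigen_enum q lam -> inW q lam i f ->
  \sum_(y : Y) f y = (i == ord0)%:R * #|Y|%:R * f y0.
Proof.
case=> q_ge0 q_stochastic q_sym q_irreducible [lam_inj lam0 _ _] f_eigen.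
have [i0|i_neq0] := eqVneq i ord0.
  have f_harmonic y : Qact q f y = f y by rewrite f_eigen i0 lam0 mul1r.
  rewrite mul1r (eq_bigr (fun _ => f y0)) ?sumr_const ?mulr_natl // => y _.
  exact: harmonic_const.
rewrite mul0r mul0r; apply: eigenfunction_sum_eq0 f_eigen _ => //.
by rewrite -lam0 (inj_eq lam_inj).
Qed.

Section Fundamental.
Variables (R : realType) (n : nat) (Y : finType) (q : Y -> Y -> R) (m : nat).
Variables (lam : 'I_m.+1 -> R) (b : 'I_m.+1 -> nat) (A : {set 'I_n}).
Hypotheses (q_ssi : symmetric_stochastic_irreducible q) (lam_enum : eigen_enum q lam).

Lemma resample_fundamental (F : pfun n Y -> R) (phi : pfun n Y) :
  fundamental q lam b A F -> resample F phi = (b ord0)%:R * #|Y|%:R * F phi.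
Proof.
move=> [idx [fam [fam_W card_idx F_prod]]].
have [phi_A|phi_notA] := eqVneq (pdom phi) A; last first.
  rewrite /resample F_prod (negbTE phi_notA) mulr0 big1 // => j j_phi.
  by rewrite big1 // => y _; rewrite F_prod pdom_set_Some_in // (negbTE phi_notA).
pose value (th : pfun n Y) i := if th i is Some y then fam i y else 0.
have F_split th j : pdom th = A -> j \in A ->
    F th = value th j * \prod_(i in A | i != j) value th i.
  by move=> th_A j_A; rewrite F_prod th_A eqxx (bigD1 j).
have resample_j j : j \in A ->
    \sum_(y : Y) F (pfun_set phi j (Some y)) = (idx j == ord0)%:R * #|Y|%:R * F phi.
  move=> j_A; have : j \in pdom phi by rewrite phi_A.
  rewrite inE; case phij: (phi j) => [y0|] // _.
  have set_A y : pdom (pfun_set phi j (Some y)) = A.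
    by rewrite pdom_set_Some_in // phi_A.
  have F_set y :
      F (pfun_set phi j (Some y)) = fam j y * \prod_(i in A | i != j) value phi i.
    rewrite (F_split _ j) //; congr (_ * _); first by rewrite /value pfun_setE eqxx.
    by apply: eq_bigr => i /andP[_ i_neq_j]; rewrite /value pfun_setE (negbTE i_neq_j).
  rewrite (eq_bigr _ (fun y _ => F_set y)) -mulr_suml (F_split phi j) // /value phij.
  by rewrite (sum_inW y0 q_ssi lam_enum (fam_W j j_A)) !mulrA.
rewrite /resample phi_A (eq_bigr _ resample_j) -!mulr_suml -natr_sum.
congr (_%:R * _ * _); rewrite -card_idx -sum1_card.
rewrite [RHS](eq_bigl (fun j => (j \in A) && (idx j == ord0))) => [|j]; last first.
  by rewrite inE.
by rewrite big_mkcondr; apply: eq_bigr => j _; case: (idx j == ord0).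
Qed.

Lemma inP_eq0 (F : pfun n Y -> R) (th : pfun n Y) :
  inP q lam b A F -> pdom th != A -> F th = 0.
Proof.
move=> [N [fs [c [fs_fund ->]]]] th_notA; rewrite big1 // => l _.
by have [idx [fam [_ _ ->]]] := fs_fund l; rewrite (negbTE th_notA) mulr0.
Qed.

Lemma resample_inP (F : pfun n Y -> R) (phi : pfun n Y) :
  inP q lam b A F -> resample F phi = (b ord0)%:R * #|Y|%:R * F phi.
Proof.
move=> [N [fs [c [fs_fund F_span]]]].
rewrite /resample F_span mulr_sumr.
under eq_bigr do under eq_bigr do rewrite F_span.
under eq_bigr do rewrite exchange_big /=.
rewrite exchange_big /=; apply: eq_bigr => l _.
rewrite mulrCA -(resample_fundamental phi (fs_fund l)) /resample mulr_sumr.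
by apply: eq_bigr => j _; rewrite mulr_sumr.
Qed.

End Fundamental.

Theorem corollary7p6 (R : realType) (n : nat) (Y : finType)
  (q : Y -> Y -> R) (m : nat) (lam : 'I_m.+1 -> R)
  (k : nat) (a : 'I_m.+1 -> nat) (A : {set 'I_n}) (F : pfun n Y -> R) :
  symmetric_stochastic_irreducible q ->
  eigen_enum q lam ->
  (2 <= k)%N -> (k <= n.-1)%N ->
  (\sum_(i < m.+1) a i)%N = k.+1 ->
  (1 <= a ord0)%N ->
  #|A| = k ->
  inP q lam (tprime a) A F ->
  forall th : pfun n Y,
    Dop (k.+1) (Dstar (k.+1) F) th - Dstar k (Dop k F) th
    = #|Y|%:R * ((n + ell a)%:R - (2 * k)%:R) * F th.
Proof.
move=> q_ssi lam_enum _ _ sum_a a0_pos card_A F_P th.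
have [card_th|card_th] := eqVneq #|pdom th| k; last first.
  have F_th : F th = 0.
    by apply: inP_eq0 F_P _; apply: contraNneq card_th => ->; rewrite card_A.
  by rewrite /Dop /Dstar eqSS (negbTE card_th) subrr F_th mulr0.
rewrite -card_th Dop_Dstar_commutator (resample_inP q_ssi lam_enum th F_P) /tprime eqxx.
have card_le : (#|pdom th| <= n)%N by rewrite -[n in (_ <= n)%N]card_ord max_card.
have ell_a : (ell a)%:R = #|pdom th|%:R + 1 - (a ord0)%:R :> R.
  have : (a ord0 + ell a)%N = k.+1 by rewrite -sum_a (bigD1 ord0).
  rewrite -card_th -addn1 => /(congr1 (GRing.natmul (1 : R))).
  by rewrite !natrD => <-; ring.
by rewrite natrB // natrD ell_a natrM -subn1 natrB //; ring.
Qed.
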